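(* Consider the augmented Lagrange algorithm described in the context (with arbitrary choices of solutions in step (1)), and assume that only finitely many of its steps are successful. Then $\limsup_{k\to\infty}(\bar\mu_k,\psi-\bar y_k)_+\le0$.
   Context: Setting. Let $\Omega\subset\mathbb{R}^N$, $N\in\{2,3\}$, be a bounded domain with $C^{1,1}$ boundary $\Gamma$, or a bounded convex domain with polygonal boundary $\Gamma$. Let $y_d\in L^2(\Omega)$, $\psi\in C(\bar\Omega)$, $\alpha>0$, $u_a,u_b\in L^\infty(\Omega)$ with $u_a\le u_b$, $U_{ad}=\{u\in L^\infty(\Omega): u_a\le u\le u_b\text{ a.e.}\}$. Let $Ay=-\sum_{i,j=1}^N\partial_{x_j}(a_{ij}\partial_{x_i}y)+a_0y$ with $a_{ij}\in C^{0,1}(\bar\Omega)$, $a_0\in L^\infty(\Omega)$, $a_0\ge0$ a.e., $a_0\not\equiv0$, uniformly elliptic with constant $\delta>0$; $\partial_{\nu_A}y=\sum a_{ij}\partial_{x_i}y\,\nu_j$; $A^*$ the formal adjoint with conormal derivative $\partial_{\nu_{A^*}}$. The function $d:\Omega\times\mathbb{R}\to\mathbb{R}$ is measurable in $x$, $C^2$ in $y$ for a.e. $x$, $\|d(\cdot,0)\|_\infty+\|d_y(\cdot,0)\|_\infty+\|d_{yy}(\cdot,0)\|_\infty<\infty$, $d_y\ge0$, $d_{yy}$ Lipschitz in $y$ on bounded sets uniformly in $x$, and $d_y>0$ on $E_\Omega\times\mathbb{R}$ for some $E_\Omega$ of positive measure. $S(u)\in H^1(\Omega)\cap C(\bar\Omega)$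 is the weak solution of $Ay+d(x,y)=u$ in $\Omega$, $\partial_{\nu_A}y=0$ on $\Gamma$. $(\cdot)_+=\max(0,\cdot)$ pointwise; $(a,b)_+:=\int_\Omega\max(0,a(x)b(x))dx$. Optimality system of the augmented Lagrange sub-problem ($\rho>0$, $0\le\mu\in L^2$): $(\bar y,\bar u,\bar p)$ with $\bar u\in U_{ad}$, $\bar y=S(\bar u)$, $\bar p\in H^1(\Omega)$ weak solution of $A^*\bar p+d_y(x,\bar y)\bar p=\bar y-y_d+(\mu+\rho(\bar y-\psi))_+$, $\partial_{\nu_{A^*}}\bar p=0$, and $(\bar p+\alpha\bar u,u-\bar u)\ge0$ for all $u\in U_{ad}$. Algorithm: choose $\rho_1>0$, $0\le\mu_1\in L^2(\Omega)$, $\theta>1$, $\tau\in(0,1)$, $R_0^+>0$; $k=n=1$. Iteration $k$: (1) choose a solution $(\bar y_k,\bar u_k,\bar p_k)$ of the optimality system with $\mu=\mu_k,\rho=\rho_k$; (2) $\bar\mu_k:=(\mu_k+\rho_k(\bar y_k-\psi))_+$; (3) $R_k:=\|(\bar y_k-\psi)_+\|_{C(\bar\Omega)}+(\bar\mu_k,\psi-\bar y_k)_+$; (4) if $R_k\le\tau R^+_{n-1}$ the step is successful: $\mu_{k+1}:=\bar\mu_k$, $\rho_{k+1}:=\rho_k$, $R_n^+:=R_k$, $n:=n+1$; (5) otherwise $\mu_{k+1}:=\mu_k$, $\rho_{k+1}:=\theta\rho_k$; then $k:=k+1$ and repeat indefinitely. *)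

From HB Require Import structures.
From mathcomp Require Import all_boot all_order all_algebra.
From mathcomp Require Import all_classical all_reals all_analysis.
Set Implicit Arguments. Unset Strict Implicit. Unset Printing Implicit Defensive.
Import Order.TTheory GRing.Theory Num.Theory.
Local Open Scope classical_set_scope.
Local Open Scope ring_scope.

Definition ppair {d} {T : measurableType d} {R : realType}
  (mu : {measure set T -> \bar R}) (Om : set T) (a b : T -> R) : \bar R :=
  (\int[mu]_(x in Om) (Num.max 0 (a x * b x))%:E)%E.

(* || f_+ ||_{C(closure Omega)} computed as the sup over Omega of max(0, f) *)
Definition supnorm_pos {T : Type} {R : realType} (Om : set T) (f : T -> R)
  : \bar R := ereal_sup [set (Num.max 0 (f x))%:E | x in Om].

Definition mubar_of {T : Type} {R : realType} (muk : T -> R) (rhok : R)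
  (yk psi : T -> R) : T -> R :=
  fun x => Num.max 0 (muk x + rhok * (yk x - psi x)).

Definition Rk_of {d} {T : measurableType d} {R : realType}
  (mu : {measure set T -> \bar R}) (Om : set T) (muk : T -> R) (rhok : R)
  (yk psi : T -> R) : \bar R :=
  (supnorm_pos Om (fun x => (yk x - psi x)%R)
   + ppair mu Om (mubar_of muk rhok yk psi) (fun x => (psi x - yk x)%R))%E.

(* A run of the augmented Lagrange algorithm (iterations indexed from 0
   instead of 1).  [mu_ k], [rho k] are mu_{k+1}, rho_{k+1} of the paper;
   [ybar k], [ubar k], [pbar k] the solution chosen in step (1);
   [cnt k] is the value of the counter n at the start of iteration k;
   [Rp j] is R_j^+ (Rp 0 = R_0^+).  [OptSys m r y u p] stands for
   "(y,u,p) solves the optimality system with mu = m, rho = r". *)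
Definition AL_run {d} {T : measurableType d} {R : realType}
  (mu : {measure set T -> \bar R}) (Om : set T) (psi : T -> R)
  (OptSys : (T -> R) -> R -> (T -> R) -> (T -> R) -> (T -> R) -> Prop)
  (rho1 : R) (mu1 : T -> R) (theta tau : R) (R0 : R)
  (mu_ : nat -> T -> R) (rho : nat -> R)
  (ybar ubar pbar : nat -> T -> R) (Rp : nat -> \bar R) (cnt : nat -> nat)
  : Prop :=
  [/\ [/\ mu_ 0 = mu1, rho 0 = rho1, Rp 0 = R0%:E & cnt 0 = 1%N],
      (forall k, OptSys (mu_ k) (rho k) (ybar k) (ubar k) (pbar k)) &
      forall k,
        let Rk := Rk_of mu Om (mu_ k) (rho k) (ybar k) psi in
        if asbool (Rk <= tau%:E * Rp (cnt k).-1)%E then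
          [/\ mu_ k.+1 = mubar_of (mu_ k) (rho k) (ybar k) psi,
              rho k.+1 = rho k, Rp (cnt k) = Rk & cnt k.+1 = (cnt k).+1]
        else
          [/\ mu_ k.+1 = mu_ k, rho k.+1 = (theta * rho k)%R & cnt k.+1 = cnt k]].

Definition AL_successful {d} {T : measurableType d} {R : realType}
  (mu : {measure set T -> \bar R}) (Om : set T) (psi : T -> R) (tau : R)
  (mu_ : nat -> T -> R) (rho : nat -> R) (ybar : nat -> T -> R)
  (Rp : nat -> \bar R) (cnt : nat -> nat) (k : nat) : Prop :=
  (Rk_of mu Om (mu_ k) (rho k) (ybar k) psi <= tau%:E * Rp (cnt k).-1)%E.

From HB Require Import structures.
From mathcomp Require Import all_boot all_order all_algebra.
From mathcomp Require Import all_classical all_reals all_analysis.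
From mathcomp Require Import lra measurable_realfun.
Import Order.TTheory GRing.Theory Num.Theory.
Set Implicit Arguments. Unset Strict Implicit. Unset Printing Implicit Defensive.
Local Open Scope classical_set_scope.
Local Open Scope ring_scope.

(* Pointwise, (m + r (y - p))_+ (p - y) <= m^2 / r, so the
   complementarity term (mubar_k, psi - ybar_k)_+ is at most
   ||mu_k||^2 / rho_k.  Every mu_k is square integrable, because ybar_k and
   psi are bounded on a set of finite measure.  If only finitely many steps
   succeed, then after the last success K the multiplier is frozen at mu_K
   while rho_k = theta^(k-K) rho_K grows geometrically, so the terms tend to
   0 geometrically and their limsup vanishes. *)

Lemma max0_mubar_mul_le (R : realFieldType) (m r y p : R) : 0 < r ->
  Num.max 0 (Num.max 0 (m + r * (y - p)) * (p - y)) <= m ^+ 2 / r.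
Proof.
move=> r_gt0; rewrite ge_max (divr_ge0 (sqr_ge0 m) (ltW r_gt0)) /= ler_pdivlMr //.
have [_|a_gt0] := leP (m + r * (y - p)) 0; first by rewrite !mul0r sqr_ge0.
have [s_le0|s_gt0] := leP (p - y) 0.
  have := mulr_ge0_le0 (ltW a_gt0) s_le0; have := sqr_ge0 m; nra.
(* AM-GM: 4 (m - r s) r s <= m ^+ 2 with s = p - y. *)
have := sqr_ge0 (m - 2 * r * (p - y)); nra.
Qed.

Lemma sqr_max0_le (R : realDomainType) (a : R) : (Num.max 0 a) ^+ 2 <= a ^+ 2.
Proof. by have [_|_] := leP a 0; rewrite ?expr0n /= ?sqr_ge0. Qed.

Lemma sqrD_le (R : realDomainType) (a b : R) : (a + b) ^+ 2 <= 2 * a ^+ 2 + 2 * b ^+ 2.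
Proof. have := sqr_ge0 (a - b); nra. Qed.

Section mubar_integrals.
Context d (T : measurableType d) (R : realType) (mu : {measure set T -> \bar R}).
Variable Om : set T.
Hypothesis mOm : measurable Om.

Lemma ge0_integral_lt_pinfty_le (f g : T -> R) (a c : R) :
  (mu Om < +oo)%E -> 0 <= a -> 0 <= c ->
  measurable_fun Om f -> measurable_fun Om g ->
  (forall x, Om x -> 0 <= f x) -> (forall x, Om x -> 0 <= g x) ->
  (forall x, Om x -> f x <= a * g x + c) ->
  (\int[mu]_(x in Om) (g x)%:E < +oo)%E -> (\int[mu]_(x in Om) (f x)%:E < +oo)%E.
Proof.
move=> muOm a_ge0 c_ge0 mf mg f_ge0 g_ge0 fle g_lty.
have mag : measurable_fun Om (fun x => a * g x) by exact: measurable_funM.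
apply: (@le_lt_trans _ _ (\int[mu]_(x in Om) ((a * g x)%:E + c%:E))%E).
  apply: ge0_le_integral => //.
  - exact/measurable_EFinP.
  - by apply/measurable_EFinP; exact: measurable_funD.
rewrite ge0_integralD //; last 2 first.
- by move=> x Ox; rewrite lee_fin mulr_ge0 ?g_ge0.
- exact/measurable_EFinP.
apply: lte_add_pinfty; last by rewrite integral_cst // lte_mul_pinfty.
under eq_integral do rewrite EFinM.
by rewrite ge0_integralZl_EFin //; [exact: lte_mul_pinfty|exact/measurable_EFinP].
Qed.

Variables (m y p : T -> R) (r : R).
Hypotheses (mm : measurable_fun Om m) (my : measurable_fun Om y)
  (mp : measurable_fun Om p).

Lemma measurable_mubar_of : measurable_fun Om (mubar_of m r y p).
Proof.
apply: measurable_maxr; first exact: measurable_cst.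
apply: measurable_funD => //; apply: measurable_funM; first exact: measurable_cst.
exact: measurable_funB.
Qed.

Lemma ppair_mubar_of_le : 0 < r ->
  (ppair mu Om (mubar_of m r y p) (fun x => (p x - y x)%R) <=
   r^-1%:E * \int[mu]_(x in Om) (m x ^+ 2)%:E)%E.
Proof.
move=> r_gt0; have m2 : measurable_fun Om (fun x => m x ^+ 2).
  exact: measurable_funX.
rewrite /ppair -ge0_integralZl_EFin //; last 3 first.
- by move=> x _; rewrite lee_fin sqr_ge0.
- exact/measurable_EFinP.
- by rewrite invr_ge0 ltW.
apply: ge0_le_integral => //.
- by move=> x _; rewrite lee_fin le_max lexx.
- apply/measurable_EFinP; apply: measurable_maxr; first exact: measurable_cst.
  by apply: measurable_funM; [exact: measurable_mubar_of|exact: measurable_funB].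
- by apply/measurable_EFinP; apply: measurable_funM => //; exact: measurable_cst.
- by move=> x _; rewrite -EFinM lee_fin [r^-1 * _]mulrC; exact: max0_mubar_mul_le.
Qed.

Lemma mubar_of_sqr_integral_lt_pinfty (M : R) : (mu Om < +oo)%E -> 0 <= r ->
  (forall x, Om x -> `|y x - p x| <= M) ->
  (\int[mu]_(x in Om) (m x ^+ 2)%:E < +oo)%E ->
  (\int[mu]_(x in Om) (mubar_of m r y p x ^+ 2)%:E < +oo)%E.
Proof.
move=> muOm r_ge0 yp_le m_lty.
apply: (ge0_integral_lt_pinfty_le (a := 2) (c := 2 * (r * M) ^+ 2)) m_lty => //.
- by rewrite mulr_ge0 ?sqr_ge0.
- by apply: measurable_funX; exact: measurable_mubar_of.
- exact: measurable_funX.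
- by move=> x _; rewrite sqr_ge0.
- by move=> x _; rewrite sqr_ge0.
move=> x Ox; rewrite /mubar_of; apply: le_trans (sqr_max0_le _) _.
apply: le_trans (sqrD_le _ _) _; rewrite lerD2l ler_pM2l // !exprMn ler_wpM2l ?sqr_ge0 //.
by have /ler_normlP[] := yp_le x Ox; nra.
Qed.

End mubar_integrals.

Lemma finite_set_nat_ub (A : set nat) :
  finite_set A -> exists K, forall k, (K <= k)%N -> ~ A k.
Proof.
move=> /finite_fsetP[X ->]; exists (\max_(i <- finmap.enum_fset X) i).+1 => k Kk /= kX.
by move: Kk; rewrite ltnNge leq_bigmax_seq.
Qed.

Lemma geometric_squeeze_limn_esup (R : realType) (u : nat -> \bar R) (N : nat) (c z : R) :
  `|z| < 1 -> (forall n, (0 <= u n)%E) ->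
  (forall n, (u (n + N)%N <= (geometric c z n)%:E)%E) -> limn_esup u = 0%E.
Proof.
move=> z_lt1 u_ge0 u_le.
suff /cvg_limn_einf_sup[] : u @ \oo --> 0%E by [].
apply: (@squeeze_cvge _ _ _ _ (cst 0%E) _ (fun n => (geometric c z (n - N)%N)%:E)).
- near=> n; rewrite u_ge0 /=.
  have Nn : (N <= n)%N by near: n; exists N.
  by have := u_le (n - N)%N; rewrite subnK.
- exact: cvg_cst.
- apply: cvg_EFin; first by near=> n.
  exact: cvg_comp (cvg_subnr N) (cvg_geometric c z_lt1).
Unshelve. all: by end_near. Qed.

Section augmented_Lagrange_run.
Context d (T : measurableType d) (R : realType) (mu : {measure set T -> \bar R}).
Variables (Om : set T) (psi : T -> R)
  (OptSys : (T -> R) -> R -> (T -> R) -> (T -> R) -> (T -> R) -> Prop)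
  (rho1 : R) (mu1 : T -> R) (theta tau R0 : R)
  (mu_ : nat -> T -> R) (rho : nat -> R)
  (ybar ubar pbar : nat -> T -> R) (Rp : nat -> \bar R) (cnt : nat -> nat).
Hypothesis run :
  AL_run mu Om psi OptSys rho1 mu1 theta tau R0 mu_ rho ybar ubar pbar Rp cnt.

Local Notation successful := (AL_successful mu Om psi tau mu_ rho ybar Rp cnt).

Lemma AL_run_successful k : successful k ->
  mu_ k.+1 = mubar_of (mu_ k) (rho k) (ybar k) psi /\ rho k.+1 = rho k.
Proof.
case: run => _ _ /(_ k) /=; rewrite /successful /AL_successful.
by case: asboolP => // _ [].
Qed.

Lemma AL_run_unsuccessful k : ~ successful k ->
  mu_ k.+1 = mu_ k /\ rho k.+1 = theta * rho k.
Proof.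
case: run => _ _ /(_ k) /=; rewrite /successful /AL_successful.
by case: asboolP => // _ [].
Qed.

Lemma AL_rho_gt0 : 0 < rho1 -> 0 < theta -> forall k, 0 < rho k.
Proof.
move=> rho1_gt0 theta_gt0; case: run => -[_ rho0 _ _] _ _.
elim=> [|k IHk]; first by rewrite rho0.
have [/AL_run_successful[_ ->]|/AL_run_unsuccessful[_ ->]] // := pselect (successful k).
exact: mulr_gt0.
Qed.

Lemma AL_run_after_last_success K : (forall k, (K <= k)%N -> ~ successful k) ->
  forall j, mu_ (j + K) = mu_ K /\ rho (j + K) = theta ^+ j * rho K.
Proof.
move=> unsuccessful; elim=> [|j [IHmu IHrho]]; first by rewrite mul1r.
have [-> ->] := AL_run_unsuccessful (unsuccessful _ (leq_addl j K)).
by rewrite IHmu IHrho exprS mulrA.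
Qed.

Lemma AL_mu_sqr_integrable :
  measurable Om -> (mu Om < +oo)%E ->
  measurable_fun Om psi -> (exists M : R, forall x, Om x -> `|psi x| <= M) ->
  (forall k, measurable_fun Om (ybar k)) ->
  (forall k, exists M : R, forall x, Om x -> `|ybar k x| <= M) ->
  (forall k, 0 <= rho k) ->
  measurable_fun Om mu1 -> (\int[mu]_(x in Om) ((mu1 x) ^+ 2)%:E < +oo)%E ->
  forall k, measurable_fun Om (mu_ k) /\
            (\int[mu]_(x in Om) ((mu_ k x) ^+ 2)%:E < +oo)%E.
Proof.
move=> mOm muOm mpsi [Mpsi psi_le] mybar ybar_le rho_ge0 mmu1 mu1_lty.
case: run => -[mu0 _ _ _] _ _; elim=> [|k [mmuk muk_lty]]; first by rewrite mu0.
have [/AL_run_successful[-> _]|/AL_run_unsuccessful[-> _]] // := pselect (successful k).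
have [My y_le] := ybar_le k.
split; first exact: measurable_mubar_of.
apply: (mubar_of_sqr_integral_lt_pinfty mOm mmuk (mybar k) mpsi (M := My + Mpsi)) => // x Ox.
by apply: le_trans (ler_normB _ _) _; apply: lerD; [exact: y_le|exact: psi_le].
Qed.

End augmented_Lagrange_run.

Theorem lemma4p2 (d : measure_display) (T : measurableType d) (R : realType)
  (mu : {measure set T -> \bar R}) (Om : set T) (psi : T -> R)
  (OptSys : (T -> R) -> R -> (T -> R) -> (T -> R) -> (T -> R) -> Prop)
  (rho1 : R) (mu1 : T -> R) (theta tau R0 : R)
  (mu_ : nat -> T -> R) (rho : nat -> R)
  (ybar ubar pbar : nat -> T -> R) (Rp : nat -> \bar R) (cnt : nat -> nat) :
  measurable Om -> Om !=set0 -> (mu Om < +oo)%E ->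
  measurable_fun Om psi -> (exists M : R, forall x, Om x -> `|psi x| <= M) ->
  (forall k, measurable_fun Om (ybar k)) ->
  (forall k, exists M : R, forall x, Om x -> `|ybar k x| <= M) ->
  0 < rho1 ->
  (forall x, Om x -> 0 <= mu1 x) -> measurable_fun Om mu1 ->
  (\int[mu]_(x in Om) ((mu1 x) ^+ 2)%:E < +oo)%E ->
  1 < theta -> 0 < tau < 1 -> 0 < R0 ->
  AL_run mu Om psi OptSys rho1 mu1 theta tau R0 mu_ rho ybar ubar pbar Rp cnt ->
  finite_set [set k | AL_successful mu Om psi tau mu_ rho ybar Rp cnt k] ->
  (limn_esup (fun k => ppair mu Om (mubar_of (mu_ k) (rho k) (ybar k) psi)
                          (fun x => (psi x - ybar k x)%R)) <= 0)%E.
Proof.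
move=> mOm _ muOm mpsi psi_bd mybar ybar_bd rho1_gt0 _ mmu1 mu1_lty theta_gt1 _ _.
move=> run /finite_set_nat_ub[K unsuccessful].
have theta_gt0 : 0 < theta := lt_trans ltr01 theta_gt1.
have rho_gt0 := AL_rho_gt0 run rho1_gt0 theta_gt0.
have [mmuK muK_lty] := AL_mu_sqr_integrable run mOm muOm mpsi psi_bd mybar ybar_bd
  (fun k => ltW (rho_gt0 k)) mmu1 mu1_lty K.
set I := (\int[mu]_(x in Om) (mu_ K x ^+ 2)%:E)%E in muK_lty.
have I_fin : I \is a fin_num.
  by rewrite ge0_fin_numE // integral_ge0 // => x _; rewrite lee_fin sqr_ge0.
rewrite (@geometric_squeeze_limn_esup _ _ K (fine I / rho K) theta^-1) //.
- by rewrite gtr0_norm ?invr_gt0 // invf_lt1.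
- by move=> k; apply: integral_ge0 => x _; rewrite lee_fin le_max lexx.
move=> j; have [-> ->] := AL_run_after_last_success run unsuccessful j.
apply: le_trans (ppair_mubar_of_le _ mOm mmuK (mybar _) mpsi _) _.
  by rewrite mulr_gt0 // exprn_gt0.
rewrite -/I -(fineK I_fin) -EFinM lee_fin /geometric /= exprVn.
by rewrite invfM mulrC [_^-1 * _^-1]mulrC mulrA.
Qed.
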